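(* Let $k$ be an even positive integer. Then $S_3(k;2)=S_{3,2}(k;2)=2k-3$.
   Context: Let $k,r$ be positive integers with $r\mid k$. A solution to $\mathcal{E}$ is a $k$-tuple $(x_1,\dots,x_k)$ of positive integers (not necessarily distinct) with $\sum_{i=1}^{k-1}x_i=x_k$; it lies in $[1,n]$ if all $x_i\in\{1,\dots,n\}$. Given a coloring $\chi$ of $[1,n]$ with colors in $\{0,1,\dots,r-1\}$ (viewed as integers), a solution is $r$-zero-sum if $\sum_{i=1}^k\chi(x_i)\equiv 0\pmod r$. $S_3(k;r)$ denotes the least positive integer $n$ such that every coloring $\chi:[1,n]\to\{0,1,\dots,r-1\}$ admits an $r$-zero-sum solution to $\mathcal{E}$ in $[1,n]$. $S_{3,2}(k;r)$ denotes the least positive integer $n$ such that every coloring $\chi:[1,n]\to\{0,1\}$ admits an $r$-zero-sum solution to $\mathcal{E}$ in $[1,n]$. *)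

From mathcomp Require Import all_boot.
Set Implicit Arguments.
Unset Strict Implicit.
Unset Printing Implicit Defensive.

(* A k-tuple (x_1,...,x_k) is encoded as x : nat -> nat with x_i := x (i-1),
   i.e. indices 0..k-1; only the values at 0..k-1 matter. *)
Definition solution_in (k n : nat) (x : nat -> nat) : Prop :=
  (forall i, i < k -> 1 <= x i <= n) /\ \sum_(i < k.-1) x i = x k.-1.

Definition zero_sum (k r : nat) (chi : nat -> nat) (x : nat -> nat) : Prop :=
  \sum_(i < k) chi (x i) = 0 %[mod r].

Definition every_coloring_has_zs (k r c n : nat) : Prop :=
  forall chi : nat -> nat, (forall y, 1 <= y <= n -> chi y < c) ->
  exists x, solution_in k n x /\ zero_sum k r chi x.

Definition least_pos (P : nat -> Prop) (n : nat) : Prop :=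
  0 < n /\ P n /\ forall m, 0 < m -> m < n -> ~ P m.

Definition S3_eq (k r n : nat) : Prop := least_pos (every_coloring_has_zs k r r) n.
Definition S32_eq (k r n : nat) : Prop := least_pos (every_coloring_has_zs k r 2) n.

From mathcomp Require Import all_boot zify.

Set Implicit Arguments.
Unset Strict Implicit.
Unset Printing Implicit Defensive.

(* Write k = m + 2 with m even.  For n = 2m + 1, the three solutions
   (1,...,1, m+1), (m+1, 1,...,1, 2m+1) and (1, 2,...,2, 2m+1) have color
   sums adding up to 2(m+1) chi(1) + 2 chi(m+1) + 2 chi(2m+1) + m chi(2),
   which is even, so one of them is 2-zero-sum whatever the coloring.
   For n <= 2m, every solution has its m + 1 summands at most m and its last
   entry above m, so coloring [1, m] by 1 and the rest by 0 gives every
   solution the odd color sum m + 1. *)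

Definition solution_of (s : seq nat) : nat -> nat := nth 0 (rcons s (sumn s)).

Lemma solution_of_in (s : seq nat) (n : nat) :
  all (fun v => 0 < v) s -> 0 < sumn s <= n -> solution_in (size s).+1 n (solution_of s).
Proof.
move=> /allP s_pos /andP[sum_pos sum_le_n]; split.
- move=> i; rewrite ltnS leq_eqVlt => /orP[/eqP-> | lt_i_s].
    by rewrite /solution_of nth_rcons ltnn eqxx sum_pos.
  rewrite /solution_of nth_rcons lt_i_s.
  have s_i : nth 0 s i \in s by rewrite mem_nth.
  rewrite s_pos //=; apply: leq_trans sum_le_n.
  by rewrite sumnE (big_rem _ s_i) leq_addr.
- rewrite /= /solution_of nth_rcons ltnn eqxx sumnE (big_nth 0) big_mkord.
  by apply: eq_bigr => i _; rewrite nth_rcons ltn_ord.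
Qed.

Lemma color_sum_solution_of (chi : nat -> nat) (s : seq nat) :
  \sum_(i < (size s).+1) chi (solution_of s i) = \sum_(v <- s) chi v + chi (sumn s).
Proof.
by rewrite -(size_rcons s (sumn s)) -big_rcons /= (big_nth 0) big_mkord.
Qed.

Lemma sum_nseq (F : nat -> nat) (n a : nat) : \sum_(v <- nseq n a) F v = n * F a.
Proof. by rewrite big_nseq iter_addn addn0 mulnC. Qed.

Lemma every_coloring_has_zs2 (m c : nat) :
  ~~ odd m -> every_coloring_has_zs m.+2 2 c (2 * m).+1.
Proof.
move=> m_even chi _.
pose x a b := solution_of (a :: nseq m b).
have size_s (a b : nat) : size (a :: nseq m b) = m.+1 by rewrite /= size_nseq.
have sum_s a b : sumn (a :: nseq m b) = a + m * b by rewrite /= sumn_nseq mulnC.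
have sol a b : 0 < a -> 0 < b -> a + m * b <= (2 * m).+1 ->
    solution_in m.+2 (2 * m).+1 (x a b).
  move=> a_pos b_pos le_n; rewrite -(size_s a b); apply: solution_of_in.
    by rewrite /= a_pos all_nseq b_pos orbT.
  by rewrite sum_s le_n addn_gt0 a_pos.
have color a b : \sum_(i < m.+2) chi (x a b i) = chi a + m * chi b + chi (a + m * b).
  by rewrite -(size_s a b) color_sum_solution_of big_cons sum_nseq sum_s.
have even_total : ~~ odd (\sum_(i < m.+2) chi (x 1 1 i) +
    \sum_(i < m.+2) chi (x m.+1 1 i) + \sum_(i < m.+2) chi (x 1 2 i)).
  rewrite !color (_ : 1 + m * 1 = m.+1) 1?(_ : m.+1 + m * 1 = 1 + m * 2); try lia.
  have -> : chi 1 + m * chi 1 + chi m.+1 + (chi m.+1 + m * chi 1 + chi (1 + m * 2)) +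
      (chi 1 + m * chi 2 + chi (1 + m * 2)) =
      2 * (chi 1 + m * chi 1 + chi m.+1 + chi (1 + m * 2)) + m * chi 2 by lia.
  by rewrite oddD oddM /= oddM (negbTE m_even).
move: even_total; rewrite !oddD.
case: (boolP (odd (\sum_(i < m.+2) chi (x 1 1 i)))) => [_ | evenA _]; last first.
  by exists (x 1 1); rewrite /zero_sum modn2 (negbTE evenA); split=> //; apply: sol; lia.
case: (boolP (odd (\sum_(i < m.+2) chi (x m.+1 1 i)))) => [_ | evenB _]; last first.
  by exists (x m.+1 1); rewrite /zero_sum modn2 (negbTE evenB); split=> //; apply: sol; lia.
move=> /= evenC.
by exists (x 1 2); rewrite /zero_sum modn2 (negbTE evenC); split=> //; apply: sol; lia.
Qed.

Lemma solution_summand_bound (l n : nat) (x : nat -> nat) :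
  solution_in l.+2 n x -> forall i, i < l.+1 -> x i + l <= x l.+1.
Proof.
move=> [range /= <-] i lt_i.
rewrite (bigD1 (Ordinal lt_i)) //= leq_add2l.
apply: (@leq_trans (\sum_(j < l.+1 | j != Ordinal lt_i) 1)).
  by rewrite sum_nat_const cardC1 card_ord muln1.
by apply: leq_sum => j _; have /andP[] := range j (ltnW (ltn_ord j)).
Qed.

Lemma not_every_coloring_has_zs2 (m c n : nat) :
  ~~ odd m -> 1 < c -> n <= 2 * m -> ~ every_coloring_has_zs m.+2 2 c n.
Proof.
move=> m_even c_gt1 le_n /(_ (fun y => y <= m)) [].
  by move=> y _; case: (y <= m); lia.
move=> x [sol]; have bound := solution_summand_bound sol; have [range _] := sol.
have last_n : x m.+1 <= n by have /andP[] := range m.+1 (ltnSn _).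
have last_big : m < x m.+1.
  by have := bound 0 isT; have /andP[] := range 0 isT; lia.
have summand_small (i : 'I_m.+1) : x i <= m by have := bound i (ltn_ord i); lia.
rewrite /zero_sum big_ord_recr /= (eq_bigr (fun _ => 1)) => [|i _]; last first.
  by rewrite summand_small.
by rewrite sum_nat_const card_ord muln1 leqNgt last_big addn0 !modn2 /= (negbTE m_even).
Qed.

Theorem proposition3 (k : nat) (hk : 0 < k) (heven : ~~ odd k) :
  S3_eq k 2 (2 * k - 3) /\ S32_eq k 2 (2 * k - 3).
Proof.
case: k hk heven => [|[|m]] //= _; rewrite negbK => m_even.
have least (c : nat) : 1 < c -> least_pos (every_coloring_has_zs m.+2 2 c) (2 * m.+2 - 3).
  move=> c_gt1; rewrite (_ : 2 * m.+2 - 3 = (2 * m).+1); last by lia.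
  split=> //; split; first exact: every_coloring_has_zs2.
  by move=> n _ lt_n; apply: not_every_coloring_has_zs2; lia.
by split; apply: least.
Qed.
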